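(* Let $n\ge1$ and $0<\varphi<1$. Let $\mathbf B=(B_1,\dots,B_n)$ be $\{0,1\}$-valued random variables whose joint distribution $\mu$ belongs to $\overline{\mathcal B_\varphi}$, and let $\hat\Theta=\frac1n\sum_{i=1}^nB_i$. Then for each $P\in\{P_{\mathrm{X},n},P_{\mathrm{CH},n},P_{\mathrm{PBR},n}\}$ and every $p\ge0$, $$\mathbb{P}_\mu\big(P(\hat\Theta|\varphi)\le p\big)\le p.$$
   Context: $\overline{\mathcal B_\varphi}$ is the set of distributions $\mu$ of $(B_1,\dots,B_n)\in\{0,1\}^n$ such that for every $i$ and every $\mathbf b_{\le i-1}\in\{0,1\}^{i-1}$ with $\mathbb{P}_\mu(\mathbf B_{\le i-1}=\mathbf b_{\le i-1})>0$, $\mathbb{P}_\mu(B_i=1\mid \mathbf B_{\le i-1}=\mathbf b_{\le i-1})\le\varphi$. For $t\in[0,1]$ with $nt$ an integer (convention $0^0=1$): $P_{\mathrm{X},n}(t|\varphi)=\sum_{k\ge nt}\binom{n}{k}\varphi^k(1-\varphi)^{n-k}$; $P_{\mathrm{CH},n}(t|\varphi)=\left(\frac{\varphi}{t}\right)^{nt}\left(\frac{1-\varphi}{1-t}\right)^{n(1-t)}$ if $t\ge\varphi$, and $=1$ otherwise; $P_{\mathrm{PBR},n}(t|\varphi)=\varphi^{nt}(1-\varphi)^{n(1-t)}(n+1)\binom{n}{nt}$ if $t\ge\varphi$, and $=t^{nt}(1-t)^{n(1-t)}(n+1)\binom{n}{nt}$ otherwise. *)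

From HB Require Import structures.
From mathcomp Require Import all_boot all_order all_algebra.
Set Implicit Arguments. Unset Strict Implicit. Unset Printing Implicit Defensive.
Import Order.TTheory GRing.Theory Num.Theory.
Local Open Scope ring_scope.

(* Outcomes (b_1,...,b_n) in {0,1}^n, indexed by 'I_n (coordinate i <-> B_{i+1}). *)
Definition outcome (n : nat) := {ffun 'I_n -> bool}.

Definition is_distr (R : realFieldType) (n : nat) (mu : {ffun outcome n -> R}) : Prop :=
  (forall x, 0 <= mu x) /\ \sum_(x : outcome n) mu x = 1.

Definition Prob (R : realFieldType) (n : nat) (mu : {ffun outcome n -> R})
  (A : pred (outcome n)) : R := \sum_(x : outcome n | A x) mu x.

(* x agrees with y on the first i coordinates (B_{<= i-1} = b_{<= i-1} for 0-based i) *)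
Definition prefix_eq (n : nat) (i : nat) (y x : outcome n) : bool :=
  [forall j : 'I_n, (j < i)%N ==> (x j == y j)].

(* The prefix b_{<= i-1} is represented
   by the first i coordinates of some full outcome y. *)
Definition in_Bbar (R : realFieldType) (n : nat) (phi : R) (mu : {ffun outcome n -> R}) : Prop :=
  forall (i : 'I_n) (y : outcome n),
    0 < Prob mu (prefix_eq i y) ->
    Prob mu [pred x | prefix_eq i y x && x i] / Prob mu (prefix_eq i y) <= phi.

(* number of successes, n * Theta_hat *)
Definition nsucc (n : nat) (x : outcome n) : nat := \sum_(i < n) (x i : nat).

(* The three p-value functions, evaluated at t = k / n (so that n t = k is an integer). *)
Definition P_X (R : realFieldType) (n k : nat) (phi : R) : R :=
  \sum_(k <= j < n.+1) ('C(n, j))%:R * phi ^+ j * (1 - phi) ^+ (n - j).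

Definition P_CH (R : realFieldType) (n k : nat) (phi : R) : R :=
  let t := k%:R / n%:R in
  if phi <= t then (phi / t) ^+ k * ((1 - phi) / (1 - t)) ^+ (n - k) else 1.

Definition P_PBR (R : realFieldType) (n k : nat) (phi : R) : R :=
  let t := k%:R / n%:R in
  if phi <= t then phi ^+ k * (1 - phi) ^+ (n - k) * (n.+1)%:R * ('C(n, k))%:R
  else t ^+ k * (1 - t) ^+ (n - k) * (n.+1)%:R * ('C(n, k))%:R.

(* Under [mu] in Bbar_phi the number of successes S_n is stochastically dominated
   by Bin(n, phi).  Writing S_m for the number of successes among the first m
   coordinates, the potentials V_m = P(Bin(n - m, phi) >= k - S_m) satisfy
   V_m - V_(m+1) = (phi - B_(m+1)) D_m with D_m >= 0 a function of the first m
   coordinates, so conditioning on the prefix and using P(B_(m+1) = 1 | prefix) <= phi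
   makes E[V_m] nonincreasing; comparing m = 0 with m = n gives
   P(S_n >= k) <= P_X(k/n | phi).  Any statistic G(S_n) with G >= P_X is then a valid
   p-value (take the least k with P_X(k/n | phi) <= p), and both P_CH and P_PBR
   dominate P_X: the first by exponential tilting (Chernoff), the second by bounding
   the tail by n + 1 times the largest binomial term, using unimodality of the
   binomial mass. *)

From HB Require Import structures.
From mathcomp Require Import all_boot all_order all_algebra.
From mathcomp Require Import lra ring.

Set Implicit Arguments.
Unset Strict Implicit.
Unset Printing Implicit Defensive.
Import Order.TTheory GRing.Theory Num.Theory.
Local Open Scope ring_scope.

Lemma ler_sum_subpred (R : numDomainType) (I : finType) (A B : pred I) (F : I -> R) :
  (forall i, 0 <= F i) -> (forall i, A i -> B i) ->
  \sum_(i | A i) F i <= \sum_(i | B i) F i.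
Proof.
move=> F_ge0 subAB; rewrite [X in _ <= X]big_mkcond [X in X <= _]big_mkcond.
apply: ler_sum => i _; case Ai: (A i); first by rewrite subAB.
by case: (B i).
Qed.

Definition binom_pmf {R : realFieldType} (psi : R) (r i : nat) : R :=
  ('C(r, i))%:R * psi ^+ i * (1 - psi) ^+ (r - i).

Section BinomialTail.
Variables (R : realFieldType) (psi : R).
Hypotheses (psi_ge0 : 0 <= psi) (psi_le1 : psi <= 1).
Local Notation b := (binom_pmf psi).

Lemma P_XE r k : P_X r k psi = \sum_(k <= i < r.+1) b r i.
Proof. by []. Qed.

Lemma binom_pmf_ge0 r i : 0 <= b r i.
Proof. by rewrite /binom_pmf !mulr_ge0 ?exprn_ge0 ?subr_ge0. Qed.

Lemma binom_pmf_over r i : (r < i)%N -> b r i = 0.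
Proof. by move=> lt_ri; rewrite /binom_pmf bin_small // !mul0r. Qed.

Lemma binom_pmfS r i : b r.+1 i.+1 = psi * b r i + (1 - psi) * b r i.+1.
Proof.
rewrite /binom_pmf binS natrD subSS.
case: (ltnP i r) => [lt_ir|le_ri]; last first.
  rewrite bin_small ?ltnS // !exprS; ring.
rewrite -(subnSK lt_ir) !exprS; ring.
Qed.

Lemma sum_binom_pmf_tilt r (z : R) :
  \sum_(i < r.+1) b r i * z ^+ i = (1 - psi + psi * z) ^+ r.
Proof.
rewrite exprDn; apply: eq_bigr => i _.
by rewrite /binom_pmf exprMn -mulr_natl; ring.
Qed.

Lemma P_X_from0 r : P_X r 0 psi = 1.
Proof.
have := sum_binom_pmf_tilt r 1; rewrite mulr1 subrK expr1n => <-.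
by rewrite P_XE big_mkord; apply: eq_bigr => i _; rewrite expr1n mulr1.
Qed.

Lemma P_X_over r k : (r < k)%N -> P_X r k psi = 0.
Proof. by move=> lt_rk; rewrite P_XE big_geq. Qed.

Lemma P_X_diag r : P_X r r psi = psi ^+ r.
Proof. by rewrite P_XE big_nat1 /binom_pmf binn subnn mul1r mulr1. Qed.

Lemma P_X_trials0 k : P_X 0 k psi = (k == 0%N)%:R.
Proof. by case: k => [|k]; rewrite ?P_X_from0 ?P_X_over. Qed.

Lemma P_X_decr r k : P_X r k.+1 psi <= P_X r k psi.
Proof.
case: (leqP k r) => [le_kr|lt_rk]; last by rewrite !P_X_over // ltnW.
by rewrite [X in _ <= X]P_XE big_ltn ?ltnS // -P_XE lerDr binom_pmf_ge0.
Qed.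

Lemma P_X_le1 r k : P_X r k psi <= 1.
Proof.
elim: k => [|k IHk]; first by rewrite P_X_from0.
exact: le_trans (P_X_decr r k) IHk.
Qed.

Lemma P_X_SS r k : P_X r.+1 k.+1 psi = psi * P_X r k psi + (1 - psi) * P_X r k.+1 psi.
Proof.
have shift j : \sum_(j.+1 <= i < r.+2) b r i = P_X r j.+1 psi.
  case: (leqP j.+1 r.+1) => [le_jr|lt_rj]; last by rewrite big_geq // P_X_over // ltnW.
  by rewrite big_nat_recr //= binom_pmf_over // addr0.
rewrite P_XE -shift !big_add1 /= !mulr_sumr -big_split /=.
by apply: eq_bigr => i _; rewrite binom_pmfS.
Qed.

Lemma P_XS r k : P_X r.+1 k psi = P_X r k psi + psi * (P_X r k.-1 psi - P_X r k psi).
Proof.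
case: k => [|k] /=; first by rewrite !P_X_from0 subrr mulr0 addr0.
by rewrite P_X_SS; ring.
Qed.

Lemma P_X_tilt r k (z : R) : 1 <= z -> z ^+ k * P_X r k psi <= (1 - psi + psi * z) ^+ r.
Proof.
move=> z_ge1; have z_ge0 : 0 <= z by apply: le_trans z_ge1.
rewrite -sum_binom_pmf_tilt P_XE big_geq_mkord mulr_sumr.
apply: (le_trans (y := \sum_(i < r.+1 | (k <= i)%N) b r i * z ^+ i)).
  apply: ler_sum => i le_ki; rewrite mulrC ler_wpM2l ?binom_pmf_ge0 //.
  exact: ler_weXn2l.
apply: ler_sum_subpred => // i.
by rewrite mulr_ge0 ?binom_pmf_ge0 ?exprn_ge0.
Qed.

Lemma P_X_le_max r k c :
  0 <= c -> (forall i, (k <= i <= r)%N -> b r i <= c) -> P_X r k psi <= c *+ r.+1.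
Proof.
move=> c_ge0 le_c; rewrite P_XE.
apply: le_trans (ler_sum_nat (G := fun _ => c) _) _ => [i /andP[le_ki lt_ir]|].
  by rewrite le_c // le_ki.
by rewrite sumr_const_nat ler_wpMn2l // leq_subr.
Qed.

End BinomialTail.

Section BinomialMode.
Variables (R : realFieldType) (psi : R).
Hypotheses (psi_ge0 : 0 <= psi) (psi_lt1 : psi < 1).
Local Notation b := (binom_pmf psi).

Lemma binom_pmf_ratio r i : (i < r)%N ->
  i.+1%:R * (1 - psi) * b r i.+1 = (r - i)%:R * psi * b r i.
Proof.
move=> lt_ir.
have bin_ratio : i.+1%:R * 'C(r, i.+1)%:R = (r - i)%:R * 'C(r, i)%:R :> R.
  by rewrite -!natrM mul_bin_left.
have e : (1 - psi) ^+ (r - i) = (1 - psi) * (1 - psi) ^+ (r - i.+1).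
  by rewrite -exprS subnSK.
rewrite /binom_pmf e exprS.
transitivity (i.+1%:R * 'C(r, i.+1)%:R *
    (psi * psi ^+ i * (1 - psi) * (1 - psi) ^+ (r - i.+1))); first by ring.
by rewrite bin_ratio; ring.
Qed.

Lemma binom_pmf_decr r i : r%:R * psi <= i%:R -> b r i.+1 <= b r i.
Proof.
move=> le_ri; case: (ltnP i r) => [lt_ir|le_ri']; last first.
  by rewrite binom_pmf_over ?ltnS // binom_pmf_ge0 // ltW.
have pos : 0 < i.+1%:R * (1 - psi) by rewrite mulr_gt0 ?ltr0Sn ?subr_gt0.
rewrite -(ler_pM2l pos) binom_pmf_ratio //.
apply: ler_wpM2r; first by rewrite binom_pmf_ge0 // ltW.
rewrite natrB ?(ltnW lt_ir) // -natr1; clear pos.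
(* [nra] does not see section hypotheses. *)
have := psi_lt1; nra.
Qed.

Lemma binom_pmf_incr r i : i.+1%:R <= r%:R * psi -> b r i <= b r i.+1.
Proof.
move=> le_ir.
have lt_ir : (i < r)%N.
  by rewrite -(ler_nat R); apply: le_trans le_ir _; rewrite ler_piMr ?ler0n ?ltW.
have pos : 0 < i.+1%:R * (1 - psi) by rewrite mulr_gt0 ?ltr0Sn ?subr_gt0.
rewrite -(ler_pM2l pos) binom_pmf_ratio //.
apply: ler_wpM2r; first by rewrite binom_pmf_ge0 // ltW.
rewrite natrB ?(ltnW lt_ir) // -natr1 in le_ir *; clear pos.
have := psi_ge0; nra.
Qed.

Lemma binom_pmf_le_from r k i : r%:R * psi <= k%:R -> (k <= i)%N -> b r i <= b r k.
Proof.
move=> le_rk /subnK <-; elim: (i - k)%N => [|d IHd]; first by rewrite add0n.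
rewrite addSn; apply: le_trans IHd; apply: binom_pmf_decr.
by apply: le_trans le_rk _; rewrite ler_nat leq_addl.
Qed.

Lemma binom_pmf_le_mode r k i : r%:R * psi = k%:R -> b r i <= b r k.
Proof.
move=> eq_rk; case: (leqP k i) => [le_ki|lt_ik].
  by apply: binom_pmf_le_from; rewrite ?eq_rk.
have up d j : (j + d)%N = k -> b r j <= b r k.
  elim: d j => [|d IHd] j eq_jk; first by rewrite -eq_jk addn0.
  apply: le_trans (IHd j.+1 _); last by rewrite addSnnS.
  by apply: binom_pmf_incr; rewrite eq_rk ler_nat -eq_jk addnS ltnS leq_addr.
by apply: (up (k - i)%N); rewrite subnKC // ltnW.
Qed.

End BinomialMode.

Section Prefix.
Variable n : nat.
Implicit Types (x y z : outcome n) (m : nat).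

Lemma prefix_eq_refl m x : prefix_eq m x x.
Proof. by apply/forallP => j; apply/implyP. Qed.

Lemma prefix_eq_sym m x y : prefix_eq m x y = prefix_eq m y x.
Proof.
by apply/forallP/forallP => h j; apply/implyP => lt_jm;
  move/implyP: (h j) => /(_ lt_jm) /eqP ->.
Qed.

Lemma prefix_eq_trans m x y z : prefix_eq m x y -> prefix_eq m y z -> prefix_eq m x z.
Proof.
move=> /forallP xy /forallP yz; apply/forallP => j; apply/implyP => lt_jm.
by move/implyP: (yz j) => /(_ lt_jm) /eqP ->; move/implyP: (xy j) => /(_ lt_jm).
Qed.

Definition nsucc_prefix m x : nat := \sum_(i < n | (i < m)%N) x i.

Lemma nsucc_prefix_eq m x y : prefix_eq m y x -> nsucc_prefix m x = nsucc_prefix m y.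
Proof.
move=> /forallP yx; apply: eq_bigr => i lt_im.
by move/implyP: (yx i) => /(_ lt_im) /eqP ->.
Qed.

Lemma nsucc_prefix0 x : nsucc_prefix 0 x = 0%N.
Proof. by rewrite /nsucc_prefix big_pred0. Qed.

Lemma nsucc_prefixS (i : 'I_n) x : nsucc_prefix i.+1 x = (nsucc_prefix i x + x i)%N.
Proof.
rewrite /nsucc_prefix (bigD1 i) //= addnC; congr (_ + _)%N.
by apply: eq_bigl => j; rewrite ltnS leq_eqVlt -val_eqE /=; case: ltngtP.
Qed.

Lemma nsucc_prefix_all x : nsucc_prefix n x = nsucc x.
Proof. by apply: eq_bigl => i; rewrite ltn_ord. Qed.

Lemma nsucc_le x : (nsucc x <= n)%N.
Proof.
rewrite -[X in (_ <= X)%N]card_ord -sum1_card.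
by apply: leq_sum => i _; apply: leq_b1.
Qed.

End Prefix.

Section Conditioning.
Variables (R : realFieldType) (n : nat) (mu : {ffun outcome n -> R}).
Hypothesis mu_ge0 : forall x, 0 <= mu x.

Lemma Prob_subpred (A B : pred (outcome n)) :
  (forall x, A x -> B x) -> Prob mu A <= Prob mu B.
Proof. exact: ler_sum_subpred. Qed.

Lemma mu_le_Prob (A : pred (outcome n)) x : A x -> mu x <= Prob mu A.
Proof. by move=> Ax; rewrite /Prob (bigD1 x) //= lerDl sumr_ge0. Qed.

Definition prefix_mass (m : nat) (y : outcome n) : R := Prob mu (prefix_eq m y).

Lemma prefix_mass_eq m x y : prefix_eq m y x -> prefix_mass m x = prefix_mass m y.
Proof.
move=> yx; apply: eq_bigl => z; apply/idP/idP => [xz|yz].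
  exact: prefix_eq_trans yx xz.
by apply: prefix_eq_trans yz; rewrite prefix_eq_sym.
Qed.

Lemma mu_eq0_of_prefix_mass m x : prefix_mass m x <= 0 -> mu x = 0.
Proof.
move=> mass_le0; apply/eqP; rewrite eq_le mu_ge0 andbT.
by apply: le_trans mass_le0; apply: mu_le_Prob; apply: prefix_eq_refl.
Qed.

Lemma mu_prefix_massK m x : mu x * (prefix_mass m x / prefix_mass m x) = mu x.
Proof.
have [mass0|mass_neq0] := eqVneq (prefix_mass m x) 0.
  by rewrite (@mu_eq0_of_prefix_mass m) ?mass0 ?mul0r.
by rewrite divff // mulr1.
Qed.

Lemma sum_prefix_conditional m (A : pred (outcome n)) (D : outcome n -> R) :
  (forall x y, prefix_eq m y x -> D x = D y) ->
  \sum_x mu x * ((A x)%:R * D x) =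
  \sum_y mu y * D y * (Prob mu [pred z | prefix_eq m y z && A z] / prefix_mass m y).
Proof.
move=> D_prefix; symmetry.
transitivity (\sum_y \sum_z
    (if prefix_eq m y z && A z then mu y * D y * mu z / prefix_mass m y else 0)).
  apply: eq_bigr => y _; rewrite /Prob mulr_suml mulr_sumr big_mkcond.
  by apply: eq_bigr => z _ /=; rewrite mulrA.
rewrite exchange_big; apply: eq_bigr => z _ /=.
case: (A z); last by rewrite mul0r mulr0 big1 // => y _; rewrite andbF.
transitivity (\sum_(y | prefix_eq m z y) mu y * (D z * mu z / prefix_mass m z)).
  rewrite [RHS]big_mkcond; apply: eq_bigr => y _; rewrite andbT prefix_eq_sym.
  case: ifP => // yz; rewrite (D_prefix y z yz) (prefix_mass_eq yz); ring.
rewrite -mulr_suml.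
transitivity (mu z * (prefix_mass m z / prefix_mass m z) * D z).
  by rewrite /prefix_mass /Prob; ring.
by rewrite mu_prefix_massK mul1r.
Qed.

Lemma Bbar_weighted_succ_le (phi : R) (m : 'I_n) (D : outcome n -> R) :
  in_Bbar phi mu -> (forall x, 0 <= D x) ->
  (forall x y, prefix_eq m y x -> D x = D y) ->
  \sum_x mu x * ((x m)%:R * D x) <= phi * \sum_x mu x * D x.
Proof.
move=> hB D_ge0 D_prefix.
rewrite (sum_prefix_conditional (fun x => x m) D_prefix) mulr_sumr.
apply: ler_sum => y _.
have [mass_gt0|mass_le0] := ltrP 0 (prefix_mass m y); last first.
  by rewrite (mu_eq0_of_prefix_mass mass_le0) !mul0r mulr0.
rewrite mulrC; apply: ler_wpM2r; first by rewrite mulr_ge0.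
exact: hB.
Qed.

Lemma Prob_pvalue_le (S : outcome n -> nat) (F G : nat -> R) (p : R) :
  (forall k, Prob mu [pred x | (k <= S x)%N] <= F k) ->
  (forall x, F (S x) <= G (S x)) -> (exists k, F k <= p) ->
  Prob mu [pred x | G (S x) <= p] <= p.
Proof.
move=> tail_le le_FG exF; case: (ex_minnP exF) => k Fk_le k_min.
apply: le_trans (le_trans (tail_le k) Fk_le); apply: Prob_subpred => x /= Gp.
by apply: k_min; apply: le_trans (le_FG x) Gp.
Qed.

End Conditioning.

Section BinomialDomination.
Variables (R : realFieldType) (n : nat) (phi : R) (mu : {ffun outcome n -> R}).
Hypotheses (phi_ge0 : 0 <= phi) (phi_le1 : phi <= 1).
Hypotheses (mu_ge0 : forall x, 0 <= mu x) (mu_sum1 : \sum_x mu x = 1).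
Hypothesis hB : in_Bbar phi mu.

Definition tail_potential (k m : nat) : R :=
  \sum_x mu x * P_X (n - m) (k - nsucc_prefix m x) phi.

Lemma tail_potentialS k m : (m < n)%N -> tail_potential k m.+1 <= tail_potential k m.
Proof.
move=> lt_mn; pose i := Ordinal lt_mn; pose r := (n - m.+1)%N.
pose j (x : outcome n) := (k - nsucc_prefix m x)%N.
pose D (x : outcome n) := P_X r (j x).-1 phi - P_X r (j x) phi.
have next : tail_potential k m.+1 =
    \sum_x mu x * P_X r (j x) phi + \sum_x mu x * ((x i)%:R * D x).
  rewrite -big_split; apply: eq_bigr => x _ /=; rewrite -mulrDr; congr (_ * _).
  rewrite (nsucc_prefixS i x) subnDA /D -/r -/(j x).
  by case: (x i); rewrite /= ?subn0 ?subn1 ?mul0r ?mul1r ?addr0 // addrC subrK.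
have now : tail_potential k m =
    \sum_x mu x * P_X r (j x) phi + phi * \sum_x mu x * D x.
  rewrite mulr_sumr -big_split; apply: eq_bigr => x _ /=.
  by rewrite -subnSK // P_XS /D; ring.
rewrite next now lerD2l; apply: Bbar_weighted_succ_le => // [x|x y yx].
  by rewrite /D subr_ge0; case: (j x) => [|j'] //=; apply: P_X_decr.
by rewrite /D /j (nsucc_prefix_eq yx).
Qed.

Lemma tail_potential0 k : tail_potential k 0 = P_X n k phi.
Proof.
rewrite -[RHS]mul1r -mu_sum1 mulr_suml; apply: eq_bigr => x _.
by rewrite nsucc_prefix0 !subn0.
Qed.

Lemma tail_potential_all k : tail_potential k n = Prob mu [pred x | (k <= nsucc x)%N].
Proof.
rewrite /Prob big_mkcond; apply: eq_bigr => x _ /=.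
by rewrite subnn P_X_trials0 nsucc_prefix_all subn_eq0; case: ifP; rewrite ?mulr1 ?mulr0.
Qed.

Lemma Prob_nsucc_ge_le_P_X k : Prob mu [pred x | (k <= nsucc x)%N] <= P_X n k phi.
Proof.
rewrite -tail_potential_all -tail_potential0.
suff decr m : (m <= n)%N -> tail_potential k m <= tail_potential k 0 by apply: decr.
elim: m => [|m IHm] // lt_mn.
exact: le_trans (tail_potentialS k lt_mn) (IHm (ltnW lt_mn)).
Qed.

End BinomialDomination.

Section PvalueComparison.
Variables (R : realFieldType) (n : nat) (phi : R).
Hypotheses (n_gt0 : (0 < n)%N) (phi_gt0 : 0 < phi) (phi_lt1 : phi < 1).

Let phi_ge0 : 0 <= phi. Proof. exact: ltW. Qed.
Let phi_le1 : phi <= 1. Proof. exact: ltW. Qed.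
Let n_neq0 : n%:R != 0 :> R. Proof. by rewrite pnatr_eq0 -lt0n. Qed.

Lemma P_X_le_P_PBR k : (k <= n)%N -> P_X n k phi <= P_PBR n k phi.
Proof.
move=> le_kn; rewrite /P_PBR /=; set t := k%:R / n%:R.
have nt : n%:R * t = k%:R by rewrite /t mulrC divfK.
have PBR_mass (psi : R) : psi ^+ k * (1 - psi) ^+ (n - k) * n.+1%:R * 'C(n, k)%:R =
    binom_pmf psi n k *+ n.+1 by rewrite /binom_pmf -mulr_natr; ring.
case: ifP => [le_phit|/negbT]; rewrite PBR_mass.
  apply: P_X_le_max (binom_pmf_ge0 phi_ge0 phi_le1 n k) _ => // i /andP[le_ki _].
  by apply: binom_pmf_le_from => //; rewrite -nt ler_wpM2l.
rewrite -ltNge => lt_tphi.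
have t_ge0 : 0 <= t by rewrite divr_ge0.
have t_le1 : t <= 1 by rewrite ltW // (lt_trans lt_tphi).
apply: le_trans (P_X_le1 phi_ge0 phi_le1 n k) _.
rewrite -(P_X_from0 t n).
apply: P_X_le_max (binom_pmf_ge0 t_ge0 t_le1 n k) _ => // i _.
by apply: binom_pmf_le_mode; rewrite // (lt_le_trans lt_tphi).
Qed.

Lemma P_X_le_P_CH k : (k <= n)%N -> P_X n k phi <= P_CH n k phi.
Proof.
move=> le_kn; rewrite /P_CH /=; set t := k%:R / n%:R.
case: ifP => [le_phit|_]; last exact: P_X_le1.
have t_gt0 : 0 < t by apply: lt_le_trans le_phit.
case: (ltngtP k n) => [lt_kn|lt_nk|eq_kn]; last 2 first.
- by move: le_kn; rewrite leqNgt lt_nk.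
- by rewrite /t eq_kn divff // subnn expr0 mulr1 divr1 P_X_diag.
have t_lt1 : t < 1 by rewrite /t ltr_pdivrMr ?ltr0n // mul1r ltr_nat.
(* [z] is the optimal Chernoff tilt for the threshold [t]. *)
set u := (1 - phi) / (1 - t); set z := t / phi * u.
have u_ge1 : 1 <= u by rewrite ler_pdivlMr ?subr_gt0 // mul1r lerB.
have z_ge1 : 1 <= z by rewrite mulr_ege1 // ler_pdivlMr // mul1r.
have tilt_u : 1 - phi + phi * z = u.
  by rewrite /z /u; field; rewrite subr_eq0 !gt_eqF.
have zk_gt0 : 0 < z ^+ k by rewrite exprn_gt0 // (lt_le_trans ltr01).
rewrite -(ler_pM2l zk_gt0); apply: le_trans (P_X_tilt phi_ge0 phi_le1 n k z_ge1) _.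
rewrite tilt_u mulrA -exprMn (_ : z * (phi / t) = u) -?exprD ?subnKC //.
by rewrite /z; field; rewrite !gt_eqF.
Qed.

End PvalueComparison.

Unset Implicit Arguments.

Theorem mainTheorem14 (R : realFieldType) (n : nat) (hn : (1 <= n)%N)
  (phi : R) (hphi0 : 0 < phi) (hphi1 : phi < 1)
  (mu : {ffun outcome n -> R}) (hmu : is_distr mu) (hB : in_Bbar phi mu) :
  forall P : nat -> nat -> R -> R,
    P = @P_X R \/ P = @P_CH R \/ P = @P_PBR R ->
    forall p : R, 0 <= p ->
      Prob mu [pred x | P n (nsucc x) phi <= p] <= p.
Proof.
move=> P HP p p_ge0; case: hmu => mu_ge0 mu_sum1.
apply: (Prob_pvalue_le mu_ge0 (F := fun k => P_X n k phi) (G := fun k => P n k phi)).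
- exact: Prob_nsucc_ge_le_P_X (ltW hphi0) (ltW hphi1) mu_ge0 mu_sum1 hB.
- move=> x; have le_xn := nsucc_le x.
  case: HP => [->|[->|->]] //; [exact: P_X_le_P_CH | exact: P_X_le_P_PBR].
- by exists n.+1; rewrite P_X_over.
Qed.
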